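(* Let $V$ be a real vector space endowed with some topology and $X$ a convex cone in $V$. Suppose $w\in\mathbb{R}$, $f\in P_X$, and $R$ is a locally nonsatiated total relation on $X$. If $C\subseteq X$ is a cone in $V$ and $R$ is $C$-antichain-convex, then $\mathcal{M}(R,B^w_{f,X})$ is a convex $C$-antichain included in $\operatorname{bd}(F^w_f)$.
   Context: A cone in $V$ is a subset $K$ with $\lambda K\subseteq K$ for all $\lambda>0$ (possibly empty, need not contain $0$). $V^*$ denotes the continuous linear functionals on $V$; $P_X=\{f\in V^*: f(x)>0\text{ for all }x\in X\setminus\{0\}\}$; $F^w_f=\{v\in V:f(v)\le w\}$, $B^w_{f,X}=F^w_f\cap X$; $\operatorname{bd}$ is the topological boundary. A set $A$ is $C$-antichain-convex iff for all $x,y\in A$, $\lambda\in[0,1]$ with $y-x\notin C\cup(-C)$, $\lambda x+(1-\lambda)y\in A$; $A$ is a $C$-antichain iff for all distinct $x,y\in A$, $y-x\notin C\cup(-C)$. For a relation $R\subseteq X\times X$, $R(x)=\{t\in X:(t,x)\in R\}$; $R$ is total iff for all $s,t$, $t\in R(s)$ or $s\in R(t)$; $R$ is $C$-antichain-convex iff each $R(x)$ is $C$-antichain-convex; $R$ is locally nonsatiated iff $x\in\operatorname{cl}(\{y\in X:y\in R(x),\ x\notin R(y)\})$ for all $x\in X$. For $S\subseteq X$, $m\in S$ is $R$-maximal on $S$ iff for every $s\in S$ with $s\in R(m)$, $m\in R(s)$; $\mathcal{M}(R,S)$ is the set of these. *)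

From HB Require Import structures.
From mathcomp Require Import all_boot all_order all_algebra.
From mathcomp Require Import all_classical all_reals all_analysis.
Set Implicit Arguments. Unset Strict Implicit. Unset Printing Implicit Defensive.
Import Order.TTheory GRing.Theory Num.Theory.
Local Open Scope classical_set_scope.
Local Open Scope ring_scope.

Section Defs.
Variables (R : realType) (V : preTopologicalLmodType R).

(* cone: closed under multiplication by positive scalars (may be empty,
   need not contain 0) *)
Definition is_cone (K : set V) : Prop :=
  forall (l : R) (x : V), 0 < l -> K x -> K (l *: x).

Definition is_convex (A : set V) : Prop :=
  forall (x y : V) (l : R), A x -> A y -> 0 <= l <= 1 ->
    A (l *: x + (1 - l) *: y).

(* P_X : continuous linear functionals strictly positive on X \ {0} *)
Definition strictly_positive_on (X : set V) (f : {scalar V}) : Prop :=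
  continuous (fun v : V => (f v : R^o)) /\ (forall x, X x -> x != 0 -> 0 < f x).

Definition Fset (w : R) (f : {scalar V}) : set V := [set v | f v <= w].
Definition Bset (w : R) (f : {scalar V}) (X : set V) : set V := Fset w f `&` X.

Definition bd (A : set V) : set V := closure A `\` interior A.

Definition antichain_convex (C A : set V) : Prop :=
  forall (x y : V) (l : R), A x -> A y -> 0 <= l <= 1 ->
    ~ C (y - x) -> ~ C (- (y - x)) -> A (l *: x + (1 - l) *: y).

Definition antichain (C A : set V) : Prop :=
  forall x y : V, A x -> A y -> x <> y -> ~ C (y - x) /\ ~ C (- (y - x)).

(* A relation on X is a predicate Rel : V -> V -> Prop with Rel t x -> X t /\ X x;
   Rel t x means (t, x) \in R. *)
Definition rel_on (X : set V) (Rel : V -> V -> Prop) : Prop :=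
  forall t x, Rel t x -> X t /\ X x.

Definition Rsec (X : set V) (Rel : V -> V -> Prop) (x : V) : set V :=
  [set t | X t /\ Rel t x].

Definition rel_total (X : set V) (Rel : V -> V -> Prop) : Prop :=
  forall s t, X s -> X t -> Rsec X Rel s t \/ Rsec X Rel t s.

Definition rel_antichain_convex (C X : set V) (Rel : V -> V -> Prop) : Prop :=
  forall x, antichain_convex C (Rsec X Rel x).

Definition locally_nonsatiated (X : set V) (Rel : V -> V -> Prop) : Prop :=
  forall x, X x ->
    closure [set y | X y /\ Rsec X Rel x y /\ ~ Rsec X Rel y x] x.

Definition maximals (X : set V) (Rel : V -> V -> Prop) (S : set V) : set V :=
  [set m | S m /\ forall s, S s -> Rsec X Rel m s -> Rsec X Rel s m].

End Defs.

(** A point of [B^w_{f,X}] in the interior of [F^w_f] has strictly better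
    points of [B^w_{f,X}] arbitrarily close to it by local nonsatiation, so
    maximal points lie on the boundary. If two maximal points differed by a
    nonzero element of [C], the smaller one would satisfy [f m < w] and hence be
    interior. Finally, every maximal point lies in [R(s)] for every [s] of the
    budget set by totality, so for [s] better than a convex combination [z] of
    two maximal points, antichain-convexity of [R(s)] puts [z] in [R(s)]. *)
From HB Require Import structures.
From mathcomp Require Import all_boot all_order all_algebra.
From mathcomp Require Import all_classical all_reals all_analysis.
Import Order.TTheory GRing.Theory Num.Theory.
Local Open Scope classical_set_scope.
Local Open Scope ring_scope.

Set Implicit Arguments.
Unset Strict Implicit.
Unset Printing Implicit Defensive.

Section MaximalElements.
Variables (R : realType) (V : preTopologicalLmodType R).

Lemma is_convexI (A B : set V) :
  is_convex A -> is_convex B -> is_convex (A `&` B).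
Proof. by move=> cA cB x y l [Ax Bx] [Ay By] l01; split; [apply: cA | apply: cB]. Qed.

Lemma is_convex_Fset (w : R) (f : {scalar V}) : is_convex (Fset w f).
Proof.
move=> x y l; rewrite /Fset /= => fx fy /andP[l0 l1].
have -> : w = l * w + (1 - l) * w by rewrite -mulrDl addrC subrK mul1r.
by rewrite linearD !linearZ lerD // ler_wpM2l // subr_ge0.
Qed.

Lemma interior_Fset (w : R) (f : {scalar V}) (x : V) :
  continuous (fun v : V => (f v : R^o)) -> f x < w -> interior (Fset w f) x.
Proof.
move=> fc fxw; have : nbhs x [set v | f v < w] by exact: fc x _ (lt_nbhsl fxw).
by apply: filterS => v /ltW.
Qed.

Lemma scalar_lt_of_cone_step (X C : set V) (f : {scalar V}) (x y : V) :
  strictly_positive_on X f -> C `<=` X -> C (y - x) -> x <> y -> f x < f y.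
Proof.
move=> [_ fpos] CX Cyx xy.
have : y - x != 0 by rewrite subr_eq0; apply/eqP => /esym.
by move/(fpos _ (CX _ Cyx)); rewrite raddfB subr_gt0.
Qed.

Variables (X : set V) (Rel : V -> V -> Prop).

Lemma maximals_not_interior (A : set V) (m : V) :
  locally_nonsatiated X Rel -> maximals X Rel (A `&` X) m -> ~ interior A m.
Proof.
move=> lns [[Am Xm] mmax] Aint.
have [y [[Xy [[_ Rym] nRmy]] Ay]] := lns m Xm _ Aint.
by apply: nRmy; apply: mmax.
Qed.

Lemma maximals_bd (A : set V) :
  locally_nonsatiated X Rel -> maximals X Rel (A `&` X) `<=` bd A.
Proof.
move=> lns m Mm; split; last exact: maximals_not_interior Mm.
by apply: subset_closure; case: Mm => -[].
Qed.

Lemma maximals_in_Rsec (S : set V) (m s : V) :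
  S `<=` X -> rel_total X Rel -> maximals X Rel S m -> S s -> Rsec X Rel s m.
Proof.
move=> SX tot [Sm mmax] Ss.
by case: (tot m s (SX _ Sm) (SX _ Ss)) => // /(mmax _ Ss).
Qed.

Lemma is_convex_maximals (C S : set V) :
  is_convex S -> S `<=` X -> rel_total X Rel -> rel_antichain_convex C X Rel ->
  antichain C (maximals X Rel S) -> is_convex (maximals X Rel S).
Proof.
move=> cS SX tot rac ach m1 m2 l M1 M2 l01.
have [<-|m12] := pselect (m1 = m2).
  by rewrite -scalerDl addrC subrK scale1r.
have [Sm1 Sm2] := (M1.1, M2.1).
split; first exact: cS.
move=> s Ss _; have [nC nCN] := ach m1 m2 M1 M2 m12.
have [Rm1 Rm2] := (maximals_in_Rsec SX tot M1 Ss, maximals_in_Rsec SX tot M2 Ss).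
exact: rac Rm1 Rm2 l01 nC nCN.
Qed.

Lemma maximals_Bset_not_cone_step (C : set V) (w : R) (f : {scalar V}) (m1 m2 : V) :
  locally_nonsatiated X Rel -> strictly_positive_on X f -> C `<=` X ->
  maximals X Rel (Bset w f X) m1 -> maximals X Rel (Bset w f X) m2 ->
  m1 <> m2 -> ~ C (m2 - m1).
Proof.
move=> lns fpos CX M1 M2 m12 Cm; apply: (maximals_not_interior lns M1).
apply: interior_Fset; first exact: fpos.1.
exact: lt_le_trans (scalar_lt_of_cone_step fpos CX Cm m12) M2.1.1.
Qed.

Lemma antichain_maximals_Bset (C : set V) (w : R) (f : {scalar V}) :
  locally_nonsatiated X Rel -> strictly_positive_on X f -> C `<=` X ->
  antichain C (maximals X Rel (Bset w f X)).
Proof.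
move=> lns fpos CX m1 m2 M1 M2 m12.
split; first exact: maximals_Bset_not_cone_step lns fpos CX M1 M2 m12.
have m21 : m2 <> m1 by move=> /esym.
by rewrite opprB; exact: maximals_Bset_not_cone_step lns fpos CX M2 M1 m21.
Qed.

End MaximalElements.

Theorem theorem13 (R : realType) (V : preTopologicalLmodType R)
  (X : set V) (w : R) (f : {scalar V}) (Rel : V -> V -> Prop) (C : set V) :
  is_cone X -> is_convex X ->
  strictly_positive_on X f ->
  rel_on X Rel -> rel_total X Rel -> locally_nonsatiated X Rel ->
  is_cone C -> C `<=` X ->
  rel_antichain_convex C X Rel ->
  is_convex (maximals X Rel (Bset w f X)) /\
  antichain C (maximals X Rel (Bset w f X)) /\
  maximals X Rel (Bset w f X) `<=` bd (Fset w f).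
Proof.
move=> _ convX fpos _ tot lns _ CX rac.
have ach : antichain C (maximals X Rel (Bset w f X)).
  exact: antichain_maximals_Bset lns fpos CX.
split; [|split=> //; exact: maximals_bd].
apply: is_convex_maximals => //; last by move=> x [].
exact: (is_convexI (@is_convex_Fset R V w f) convX).
Qed.
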